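(* The space $(\mathbb{R}^{\mathbb{Z}_<},\tau_\iota)$ is first-countable but not second-countable.
   Context: $\mathbb{R}^{\mathbb{Z}_<}$ is the set of formal series $\sum_{i\ge -k}a_i\epsilon^i$ ($k\in\mathbb{N}\cup\{0\}$, $a_i\in\mathbb{R}$), with coefficientwise addition, Cauchy-product multiplication and lexicographic order; $|\cdot|$ is the associated absolute value, $d(\mathbf{x},\mathbf{y})=|\mathbf{y}-\mathbf{x}|$, $B_{\mathbf{x}}(\mathbf{y})=\{\mathbf{z}:d(\mathbf{x},\mathbf{z})<\mathbf{y}\}$. For $m\in\mathbb{N}\cup\{0\}$ let $\Delta^m=\{a\epsilon^m: a\in\mathbb{R}\}$ (with $a\neq0$ when $m\ge1$) and $\Delta^{\downarrow m}=\bigcup_{n\ge m}\Delta^n$. A set $O$ is $\iota$-open iff for every $\mathbf{x}\in O$ there is a positive $\iota\in\Delta^{\downarrow m}$ (for some $m$) with $B_{\mathbf{x}}(\iota)\subseteq O$; $\tau_\iota$ is the topology generated by unions of such $\iota$-balls. *)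

From HB Require Import structures.
From mathcomp Require Import all_boot all_order all_algebra.
From mathcomp Require Import boolp classical_sets cardinality.
From mathcomp Require Import Rstruct.
From Stdlib Require Rdefinitions.
Notation R := Rdefinitions.R.

Set Implicit Arguments.
Unset Strict Implicit.
Unset Printing Implicit Defensive.

Import Order.TTheory GRing.Theory Num.Theory.
Local Open Scope classical_set_scope.
Local Open Scope ring_scope.

(** * The field R^{Z_<} of formal series  sum_{i >= -k} a_i eps^i *)

Record LS := MkLS {
  coef : int -> R ;
  coef_bounded : exists k : nat, forall i : int, i < - (k%:Z) -> coef i = 0 }.

Lemma LS_ext (x y : LS) : coef x = coef y -> x = y.
Proof.
case: x => cx px; case: y => cy py /= E; subst cy.
by rewrite (Prop_irrelevance px py).
Qed.

Definition LS0 : LS := @MkLS (fun _ => 0) (ex_intro _ 0%N (fun _ _ => erefl)).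

Lemma LSopp_subproof (x : LS) :
  exists k : nat, forall i : int, i < - (k%:Z) -> - coef x i = 0.
Proof.
case: (coef_bounded x) => k hk; exists k => i hi.
by rewrite hk // oppr0.
Qed.
Definition LSopp (x : LS) : LS := MkLS (LSopp_subproof x).

Lemma LSadd_subproof (x y : LS) :
  exists k : nat, forall i : int, i < - (k%:Z) -> coef x i + coef y i = 0.
Proof.
case: (coef_bounded x) => k hk; case: (coef_bounded y) => l hl.
exists (maxn k l) => i hi.
rewrite hk ?hl ?addr0 //; apply: (lt_le_trans hi);
  rewrite lerN2 lez_nat; [exact: leq_maxr | exact: leq_maxl].
Qed.
Definition LSadd (x y : LS) : LS := MkLS (LSadd_subproof x y).

Definition LSsub (x y : LS) : LS := LSadd x (LSopp y).

Lemma LSmono_subproof (a : R) (m : int) :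
  exists k : nat, forall i : int, i < - (k%:Z) ->
    (if i == m then a else 0) = 0.
Proof.
exists (absz m) => i hi; case: eqP => // E; subst i.
have : - ((absz m)%:Z) <= m.
  by rewrite abszE lerNl -normrN ler_norm.
by rewrite leNgt hi.
Qed.
Definition LSmono (a : R) (m : int) : LS := MkLS (LSmono_subproof a m).

Definition LSlt (x y : LS) : Prop :=
  exists j : int, coef x j < coef y j /\
    (forall i : int, i < j -> coef x i = coef y i).

Definition LSabs (x : LS) : LS := if `[< LSlt x LS0 >] then LSopp x else x.

Definition LSdist (x y : LS) : LS := LSabs (LSsub y x).

Definition LSball (x y : LS) : set LS := [set z | LSlt (LSdist x z) y].

Definition Delta (m : nat) : set LS :=
  [set y | exists a : R, y = LSmono a (m%:Z) /\ ((0 < m)%N -> a != 0)].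

Definition Delta_down (m : nat) : set LS :=
  [set y | exists n : nat, (m <= n)%N /\ Delta n y].

Definition iota_open (O : set LS) : Prop :=
  forall x, O x -> exists (m : nat) (iota : LS),
    Delta_down m iota /\ LSlt LS0 iota /\ LSball x iota `<=` O.

Definition tau_iota : set (set LS) := [set O | iota_open O].

Definition first_countable_top (T : Type) (opens : set (set T)) : Prop :=
  forall x : T, exists2 B : set (set T), countable B &
    (forall b, B b -> opens b /\ b x) /\
    (forall U, opens U -> U x -> exists2 b, B b & b `<=` U).

Definition second_countable_top (T : Type) (opens : set (set T)) : Prop :=
  exists2 B : set (set T), countable B &
    (forall b, B b -> opens b) /\
    (forall U, opens U -> forall x, U x -> exists b, [/\ B b, b x & b `<=` U]).

(** A positive [iota] in some [Delta^{down m}] is [a eps^n] with [a > 0], and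
    the [iota]-balls around [x] are squeezed between the sets of series whose
    coefficients agree with those of [x] up to index [n] or [n + 1].  These
    countably many sets therefore form a local base at [x].  On the other hand
    the constants [r eps^0], [r] real, are pairwise separated by such open
    sets, so a countable base would inject the uncountable [R] into [nat]. *)

From HB Require Import structures.
From mathcomp Require Import all_boot all_order all_algebra.
From mathcomp Require Import boolp classical_sets cardinality.
From mathcomp Require Import Rstruct.
From Stdlib Require Import Runcountable.

Set Implicit Arguments.
Unset Strict Implicit.
Unset Printing Implicit Defensive.
Import Order.TTheory GRing.Theory Num.Theory.
Local Open Scope classical_set_scope.
Local Open Scope ring_scope.

Lemma coef_LSabs_eq0 (d : LS) (i : int) :
  (coef (LSabs d) i == 0) = (coef d i == 0).
Proof. by rewrite /LSabs; case: ifP => _ //=; rewrite oppr_eq0. Qed.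

Lemma LSabs_not_lt0 (d : LS) : ~ LSlt (LSabs d) LS0.
Proof.
rewrite /LSabs; case: ifP => [/asboolP [j [/= dj_lt0 dj_eq]]|/asboolP] //.
move=> [k [/= dk_gt0 dk_eq]].
have [jk|kj|jk] := ltgtP j k.
- by move: (dk_eq _ jk) dj_lt0 => /eqP; rewrite oppr_eq0 => /eqP ->; rewrite ltxx.
- by move: (dj_eq _ kj) dk_gt0 => ->; rewrite oppr0 ltxx.
- by move: dk_gt0; rewrite -jk oppr_lt0 => /(lt_trans dj_lt0); rewrite ltxx.
Qed.

Lemma LSmono_gt0 (a : R) (m : int) : 0 < a -> LSlt LS0 (LSmono a m).
Proof. by move=> a_gt0; exists m => /=; rewrite eqxx; split=> // i /lt_eqF ->. Qed.

Lemma LSabs_lt_mono_coef0 (d : LS) (a : R) (m : int) :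
  LSlt (LSabs d) (LSmono a m) -> forall i : int, i < m -> coef d i = 0.
Proof.
move=> [j [dj_lt dj_eq]]; have [jm|mj] := ltP j m.
  (* a first difference before index [m] would make [LSabs d] negative *)
  exfalso; apply: (@LSabs_not_lt0 d); exists j; split; first by move: dj_lt; rewrite /= lt_eqF.
  by move=> i ij; rewrite dj_eq //= lt_eqF // (lt_trans ij).
move=> i im; apply/eqP; rewrite -coef_LSabs_eq0 dj_eq ?(lt_le_trans im) //=.
by rewrite (lt_eqF im).
Qed.

Lemma LSabs_lt_mono (d : LS) (a : R) (m : int) :
  0 < a -> (forall i : int, i <= m -> coef d i = 0) -> LSlt (LSabs d) (LSmono a m).
Proof.
move=> a_gt0 d0; exists m => /=; rewrite eqxx; split.
  by have /eqP -> : coef (LSabs d) m == 0 by rewrite coef_LSabs_eq0 d0.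
by move=> i im; rewrite lt_eqF //; apply/eqP; rewrite coef_LSabs_eq0 d0 // ltW.
Qed.

Definition agree_upto (n : int) (x : LS) : set LS :=
  [set z | forall j : int, j <= n -> coef z j = coef x j].

Lemma LSball_sub_agree_upto (x : LS) (a : R) (n : int) :
  LSball x (LSmono a (n + 1)) `<=` agree_upto n x.
Proof.
move=> z /LSabs_lt_mono_coef0 dist0 j jn.
by apply/eqP; rewrite -subr_eq0; apply/eqP/dist0; rewrite ltzD1.
Qed.

Lemma agree_upto_sub_LSball (x : LS) (a : R) (n : int) :
  0 < a -> agree_upto n x `<=` LSball x (LSmono a n).
Proof.
move=> a_gt0 z xz; apply: LSabs_lt_mono => // i /xz /= ->.
by rewrite subrr.
Qed.

Lemma agree_upto_iota_open (n : nat) (x : LS) : iota_open (agree_upto n x).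
Proof.
move=> z xz; exists n.+1, (LSmono 1 n.+1); split; [|split].
- by exists n.+1; split => //; exists 1; rewrite oner_neq0.
- exact/LSmono_gt0/ltr01.
- have := @LSball_sub_agree_upto z 1 n; rewrite -PoszD addn1.
  by move=> ball_agree w /ball_agree zw j jn; rewrite zw // xz.
Qed.

Lemma Delta_down_gt0 (m : nat) (iota : LS) :
  Delta_down m iota -> LSlt LS0 iota ->
  exists (n : nat) (a : R), iota = LSmono a n /\ 0 < a.
Proof.
move=> [n [_ [a [-> _]]]] [j [/= a_gt0 _]]; exists n, a; split => //.
by move: a_gt0; case: eqP => // _; rewrite ltxx.
Qed.

Lemma iota_open_agree_upto (U : set LS) (x : LS) :
  iota_open U -> U x -> exists n : nat, agree_upto n x `<=` U.
Proof.
move=> /(_ x) oU /oU [m [iota [Diota [iota_gt0 ballU]]]].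
have [n [a [iotaE a_gt0]]] := Delta_down_gt0 Diota iota_gt0.
by exists n => z /(agree_upto_sub_LSball a_gt0); rewrite -iotaE => /ballU.
Qed.

Lemma second_countable_discrete_countable (T I : Type) (opens : set (set T))
    (U : I -> set T) (x : I -> T) :
  (forall i, opens (U i)) -> (forall i, U i (x i)) ->
  (forall i j, U i (x j) -> i = j) ->
  second_countable_top opens -> countable [set: I].
Proof.
move=> oU Ux sepU [B /countable_injP [f finj] [_ baseB]].
have /choice [b bP] : forall i, exists b, [/\ B b, b (x i) & b `<=` U i].
  by move=> i; apply: baseB; [exact: oU | exact: Ux].
apply/countable_injP; exists (f \o b) => i j _ _ /= fb_eq.
have [Bbi _ biU] := bP i; have [Bbj bjx _] := bP j.
have bij : b i = b j by apply: finj; rewrite ?inE.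
by apply: sepU; apply: biU; rewrite bij.
Qed.

HB.instance Definition _ := isPointed.Build R 0.

Lemma uncountable_R : ~ countable [set: R].
Proof.
move=> cR.
have infR : infinite_set [set: R].
  apply/infiniteP/pcard_leTP/injPex; exists (fun n : nat => n%:R) => // m n _ _.
  exact/mulrIn/oner_neq0.
have := eq_card_nat cR infR; rewrite card_eq_sym => /card_set_bijP [f [_ finj fsurj]].
have /choice [g fgK] : forall y : R, exists n : nat, f n = y.
  by move=> y; have [n _ <-] := fsurj y I; exists n.
apply: (@R_uncountable f); exists g; split=> // n.
by apply: finj; rewrite ?inE // fgK.
Qed.

Theorem mainTheorem4 :
  first_countable_top tau_iota /\ ~ second_countable_top tau_iota.
Proof.
split.
  move=> x; exists (range (fun n : nat => agree_upto n x)).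
    exact: sub_countable (card_image_le _ _) (countableP _).
  split; first by move=> _ [n _ <-]; split; [exact: agree_upto_iota_open|].
  move=> U oU Ux; have [n xU] := iota_open_agree_upto oU Ux.
  by exists (agree_upto n x); first exists n.
move=> second_countable; apply: uncountable_R.
apply: (second_countable_discrete_countable
  (U := fun r => agree_upto 0 (LSmono r 0)) _ _ _ second_countable).
- by move=> r; apply: agree_upto_iota_open.
- by [].
- by move=> r s /(_ 0 (lexx _)) /= ->.
Qed.
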